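(* For every even integer $n\ge 4$, $\chi_{ei}(C_3\square C_n)=6$.
   Context: All graphs are finite and simple. $C_k$ denotes the cycle on $k$ vertices. A path $P_4$ in $G$ is a sequence $uxyv$ of four distinct vertices with $ux,xy,yv\in E(G)$; $u,v$ are its end vertices. An $e$-injective $k$-coloring of $G$ is a function $f:V(G)\to\{1,\dots,k\}$ with $f(u)\ne f(v)$ whenever $u,v$ are the end vertices of some path $P_4$ in $G$; $\chi_{ei}(G)$ is the least such $k$. In the Cartesian product $G\square H$ two vertices are adjacent if they are adjacent in one coordinate and equal in the other. *)

From mathcomp Require Import all_boot.
Set Implicit Arguments. Unset Strict Implicit. Unset Printing Implicit Defensive.

(* A finite simple graph is given by a vertex finType T and an adjacency
   relation e : rel T (symmetric and irreflexive; see the lemmas below for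
   the graphs used in the statement). *)

Definition P4_ends (T : finType) (e : rel T) (u v : T) : Prop :=
  exists x y : T, [/\ uniq [:: u; x; y; v], e u x, e x y & e y v].

(* e-injective k-coloring: colours {1..k} represented by 'I_k. *)
Definition e_injective (T : finType) (e : rel T) (k : nat) (f : T -> 'I_k) : Prop :=
  forall u v : T, P4_ends e u v -> f u <> f v.

Definition ei_colorable (T : finType) (e : rel T) (k : nat) : Prop :=
  exists f : T -> 'I_k, e_injective e f.

Definition chi_ei_is (T : finType) (e : rel T) (k : nat) : Prop :=
  ei_colorable e k /\ forall k', ei_colorable e k' -> k <= k'.

(* Cycle C_m on vertices 'I_m (simple for m >= 3): i ~ j iff j = i+1 or i = j+1 mod m. *)
Definition cycle_adj (m : nat) : rel 'I_m :=
  fun i j => (j == (i.+1 %% m) :> nat) || (i == (j.+1 %% m) :> nat).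

Arguments cycle_adj : clear implicits.

Definition box_adj (A B : finType) (ra : rel A) (rb : rel B) : rel (A * B) :=
  fun p q => (ra p.1 q.1 && (p.2 == q.2)) || ((p.1 == q.1) && rb p.2 q.2).

Lemma cycle_adj_sym m : symmetric (cycle_adj m).
Proof. by move=> i j; rewrite /cycle_adj orbC. Qed.

Lemma cycle_adj_irr m : 2 < m -> irreflexive (cycle_adj m).
Proof.
move=> hm i; rewrite /cycle_adj orbb; apply/negP => /eqP h.
have hi := ltn_ord i.
case: (ltnP i.+1 m) => h1.
  by move: h; rewrite modn_small // => /n_Sn.
have e : i.+1 = m by apply/eqP; rewrite eqn_leq h1 hi.
by move: h; rewrite e modnn => h0; rewrite h0 in e; rewrite -e in hm.
Qed.

Lemma box_adj_sym (A B : finType) (ra : rel A) (rb : rel B) :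
  symmetric ra -> symmetric rb -> symmetric (box_adj ra rb).
Proof. by move=> sa sb p q; rewrite /box_adj sa sb [p.2 == _]eq_sym [p.1 == _]eq_sym. Qed.

Lemma box_adj_irr (A B : finType) (ra : rel A) (rb : rel B) :
  irreflexive ra -> irreflexive rb -> irreflexive (box_adj ra rb).
Proof. by move=> ia ib p; rewrite /box_adj ia ib !andbF. Qed.

From mathcomp Require Import all_boot.

Set Implicit Arguments.
Unset Strict Implicit.

(* Upper bound: colour (a, j) by (a, parity of j).  Along an edge of
   C_3 □ C_n either the row changes and the column stays, or the row stays
   and the column parity flips.  If the ends of a P_4 have the same column
   parity, the path makes 0 or 2 column steps: with 0 steps its four
   vertices lie in one column of only 3 vertices, with 2 steps its single
   row step leaves the ends in different rows.
   Lower bound: the six vertices of two adjacent columns are pairwise ends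
   of P_4's, going once around a square or an L-shape of the prism
   C_3 □ K_2. *)

Lemma ei_colorable_card (T S : finType) (e : rel T) (f : T -> S) :
  (forall u v, P4_ends e u v -> f u != f v) -> ei_colorable e #|S|.
Proof.
by move=> f_sep; exists (enum_rank \o f) => u v /f_sep /eqP neq /= /enum_rank_inj.
Qed.

Lemma card_le_ei_colorable (T S : finType) (e : rel T) (g : S -> T) (k : nat) :
  (forall s t, s != t -> P4_ends e (g s) (g t)) -> ei_colorable e k -> #|S| <= k.
Proof.
move=> g_P4 [f f_ei]; rewrite -(card_ord k); apply: (leq_card (f \o g)) => s t /= eq_st.
by apply/eqP; apply: contraT => /g_P4 /f_ei.
Qed.

Lemma uniq_size_le_card (T : finType) (s : seq T) : uniq s -> size s <= #|T|.
Proof. by move/card_uniqP <-; apply: max_card. Qed.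

Section BoxProduct.

Variables (A B : finType) (ra : rel A) (rb : rel B).

Lemma P4_ends_row_col_row (a d a' : A) (j j' : B) :
  a != d -> d != a' -> j != j' -> ra a d -> rb j j' -> ra d a' ->
  P4_ends (box_adj ra rb) (a, j) (a', j').
Proof.
move=> ad da' jj' r1 r2 r3; exists (d, j), (d, j'); split.
- by rewrite /= !inE !xpair_eqE (negbTE ad) (negbTE jj') (negbTE da') !andbF.
- by rewrite /box_adj /= r1 eqxx.
- by rewrite /box_adj /= eqxx r2 orbT.
- by rewrite /box_adj /= r3 eqxx.
Qed.

Lemma P4_ends_col_row_col (a a' : A) (j d j' : B) :
  j != d -> d != j' -> a != a' -> rb j d -> ra a a' -> rb d j' ->
  P4_ends (box_adj ra rb) (a, j) (a', j').
Proof.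
move=> jd dj' aa' r1 r2 r3; exists (a, d), (a', d); split.
- by rewrite /= !inE !xpair_eqE (negbTE jd) (negbTE aa') (negbTE dj') !andbF.
- by rewrite /box_adj /= eqxx r1 orbT.
- by rewrite /box_adj /= r2 eqxx.
- by rewrite /box_adj /= eqxx r3 orbT.
Qed.

Lemma uniq_map_fst_column (s : seq (A * B)) (j : B) :
  all (fun p => p.2 == j) s -> uniq s -> uniq (map fst s).
Proof.
move=> /allP col; rewrite map_inj_in_uniq // => -[a1 b1] [a2 b2].
by move=> /col /eqP /= -> /col /eqP /= -> /= ->.
Qed.

Section ParityColouring.

Variable c : B -> bool.
Hypotheses (ra_irr : irreflexive ra) (c_flips : forall x y, rb x y -> c x = ~~ c y).
Hypothesis card_A : #|A| <= 3.

Lemma box_adj_cases (p q : A * B) : box_adj ra rb p q ->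
  (p.1 != q.1 /\ p.2 = q.2) \/ (p.1 = q.1 /\ c p.2 = ~~ c q.2).
Proof.
case/orP => [/andP [r /eqP ->] | /andP [/eqP -> r]]; [left | right]; split=> //.
- by apply: contraTneq r => ->; rewrite ra_irr.
- exact: c_flips.
Qed.

Lemma box_P4_ends_colour (u v : A * B) :
  P4_ends (box_adj ra rb) u v -> (u.1, c u.2) != (v.1, c v.2).
Proof.
case=> x [y [uniq_uxyv /box_adj_cases ux /box_adj_cases xy /box_adj_cases yv]].
rewrite xpair_eqE; apply/negP => /andP [/eqP eq1 /eqP eq2].
case: ux => [[ux1 ux2]|[ux1 ux2]]; case: xy => [[xy1 xy2]|[xy1 xy2]];
  case: yv => [[yv1 yv2]|[yv1 yv2]].
- have one_column : all (fun p => p.2 == v.2) [:: u; x; y; v] by rewrite /= ux2 xy2 yv2 eqxx.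
  by have := leq_trans (uniq_size_le_card (uniq_map_fst_column one_column uniq_uxyv)) card_A.
(* an odd number of column steps flips c *)
all: try by move: eq2; rewrite ?ux2 ?xy2 ?yv2; case: (c v.2).
(* two column steps: the only row step separates u.1 from v.1 *)
- by move: ux1; rewrite eq1 xy1 yv1 eqxx.
- by move: xy1; rewrite -ux1 yv1 eq1 eqxx.
- by move: yv1; rewrite -xy1 -ux1 eq1 eqxx.
Qed.

End ParityColouring.

Section Prism.

Variables (j0 j1 : B).
Hypotheses (ra_complete : forall a a', a != a' -> ra a a') (card_A : 2 < #|A|).
Hypotheses (j0_neq_j1 : j0 != j1) (rb_j0j1 : rb j0 j1) (rb_j1j0 : rb j1 j0).

Let col (b : bool) : B := if b then j1 else j0.

Lemma col_flip_adj (b : bool) : col b != col (~~ b) /\ rb (col b) (col (~~ b)).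
Proof. by case: b; rewrite // eq_sym. Qed.

Lemma exists_third (a a' : A) : exists d, (a != d) && (d != a').
Proof.
have /card_gt0P [d] : 0 < #|~: [set a; a']|.
  rewrite -(leq_add2l #|[set a; a']|) cardsC addn1 cards2.
  by apply: leq_trans card_A; rewrite ltnS ltnS leq_b1.
by rewrite !inE => /norP [da da']; exists d; rewrite eq_sym da da'.
Qed.

Lemma prism_P4_ends (s t : A * bool) :
  s != t -> P4_ends (box_adj ra rb) (s.1, col s.2) (t.1, col t.2).
Proof.
case: s t => [a b] [a' b'] /=; have [<- | /negPf b'E] := eqVneq b b'.
  rewrite xpair_eqE eqxx andbT => aa'; have [nb rb_nb] := col_flip_adj b.
  have [bn rb_bn] := col_flip_adj (~~ b); rewrite negbK in bn rb_bn.
  exact: P4_ends_col_row_col nb bn aa' rb_nb (ra_complete aa') rb_bn.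
have {b'E} -> : b' = ~~ b by case: b b' b'E => [] [].
move=> _; have [d /andP [ad da']] := exists_third a a'; have [nb rb_nb] := col_flip_adj b.
exact: P4_ends_row_col_row ad da' nb (ra_complete ad) rb_nb (ra_complete da').
Qed.

End Prism.

End BoxProduct.

Lemma cycle_adj3_complete (i j : 'I_3) : i != j -> cycle_adj 3 i j.
Proof. by case: i j => [[|[|[|//]]] ?] [[|[|[|//]]] ?]. Qed.

Lemma cycle_adj_odd (m : nat) (i j : 'I_m) :
  ~~ odd m -> cycle_adj m i j -> odd i = ~~ odd j.
Proof.
move=> m_even; have succ_odd (a b : 'I_m) : (b : nat) = a.+1 %% m -> odd a = ~~ odd b.
  by move->; rewrite odd_mod ?(negbTE m_even) //= negbK.
by case/orP => /eqP /succ_odd // ->; rewrite negbK.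
Qed.

Lemma cycle_adj_0_1 (m : nat) (m_gt1 : 1 < m) :
  cycle_adj m (Ordinal (ltnW m_gt1)) (Ordinal m_gt1).
Proof. by rewrite /cycle_adj /= modn_small. Qed.

Theorem theorem4p6 (n : nat) :
  4 <= n -> ~~ odd n ->
  chi_ei_is (box_adj (cycle_adj 3) (cycle_adj n)) 6.
Proof.
move=> n_ge4 n_even.
have <- : #|{: 'I_3 * bool}| = 6 by rewrite card_prod card_ord card_bool.
split.
  apply: (ei_colorable_card (f := fun p : 'I_3 * 'I_n => (p.1, odd p.2))).
  exact: box_P4_ends_colour (@cycle_adj_irr 3 isT) (fun _ _ => cycle_adj_odd n_even)
    (eq_leq (card_ord 3)).
have n_gt1 : 1 < n by apply: leq_trans n_ge4.
move=> k; apply: card_le_ei_colorable.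
apply: (prism_P4_ends cycle_adj3_complete _ _ (cycle_adj_0_1 n_gt1)).
- by rewrite card_ord.
- by [].
- by rewrite cycle_adj_sym cycle_adj_0_1.
Qed.
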